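(* Let $C\in\mathbb{R}^{r\times n}$, $d\in\mathbb{R}^r$, where the system $Cx\ge d$ contains the constraints $x_j\ge0$ and $-x_j\ge-1$ for all $j\in[n]$, and let $\mathcal{X}=\{x\in\{0,1\}^n\mid Cx\ge d\}\ne\emptyset$. For $i\in[m]$ let $a_{i0}\in\mathbb{R}$, $a_i\in\mathbb{R}^n$ with $a_{i0}+a_i^\top x>0$ for all $x\in\mathcal{X}$, and \[ \mathcal{G}=\Bigl\{(\rho,y)=\bigl((\rho^i)_{i\in[m]},(y^i)_{i\in[m]}\bigr)\Bigm| x\in\mathcal{X},\ (\rho^i,y^i)=\frac{(1,x)}{a_{i0}+a_i^\top x}\ \text{for }i\in[m]\Bigr\}. \] For $k\in[n]$ let $\mathcal{R}^k=\{(\rho,y,u)\mid (\rho^i,y^i,u)\in\mathcal{R}^k_i\ \text{for all } i\in[m]\}$ (with $\mathcal{R}^k_i$ defined in the context). Then \[ \operatorname{proj}_{(\rho,y)}(\mathcal{R}^1)\supseteq\operatorname{proj}_{(\rho,y)}(\mathcal{R}^2)\supseteq\cdots\supseteq\operatorname{proj}_{(\rho,y)}(\mathcal{R}^n)=\operatorname{conv}(\mathcal{G}). \]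
   Context: $\mathrm{RLT}_k(\mathcal{X})$: for each row $c_lx\ge d_l$ of $Cx\ge d$ and each pair of disjoint $S,T\subseteq[n]$ with $|S\cup T|=k$, expand $(c_lx-d_l)\prod_{s\in S}x_s\prod_{t\in T}(1-x_t)\ge0$, reduce to a multilinear polynomial using $x_j^2=x_j$, and replace each monomial $\prod_{j\in e}x_j$ ($e\ne\emptyset$) by a variable $z_e$ (the empty monomial is $1$); the variables are $z_e$ for $e\subseteq[n]$, $1\le|e|\le\min(k+1,n)$. For $\rho\ge0$, ''$w\in\rho\,\mathrm{RLT}_k(\mathcal{X})$'' means $w=(w_e)$ satisfies these linear inequalities with $z$ replaced by $w$ and every constant term multiplied by $\rho$. For $i\in[m]$, $\mathcal{R}^k_i$ is the set of $(\rho^i,y^i,u)\in\mathbb{R}\times\mathbb{R}^n\times\mathbb{R}^{\{S\subseteq[n]:1\le|S|\le k\}}$ such that there is $w^i$ with: $\rho^i\ge0$, $w^i\in\rho^i\,\mathrm{RLT}_k(\mathcal{X})$, $y^i_j=w^i_{\{j\}}$ for $j\in[n]$, $a_{i0}\rho^i+a_i^\top y^i=1$, and for every $S\subseteq[n]$ with $1\le|S|\le k$: $u_S=\bigl(a_{i0}+\sum_{j\in S}a_{ij}\bigr)w^i_S+\sum_{r\in[n]\setminus S}a_{ir}w^i_{S\cup\{r\}}$. ($u_S$ models $\prod_{j\in S}x_j$ and $w^i_S$ models $\prod_{j\in S}x_j/(a_{i0}+a_i^\top x)$.) *)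

From HB Require Import structures.
From mathcomp Require Import all_boot all_order all_algebra.
Set Implicit Arguments. Unset Strict Implicit. Unset Printing Implicit Defensive.
Import Order.TTheory GRing.Theory Num.Theory.
Local Open Scope ring_scope.

(* Points x in {0,1}^n are represented by their support x : {set 'I_n}. *)
Definition inX (R : realFieldType) (r n : nat) (C : 'I_r -> 'I_n -> R)
  (d : 'I_r -> R) (x : {set 'I_n}) : Prop :=
  forall l : 'I_r, d l <= \sum_(j < n) C l j * (j \in x)%:R.

(* value of the variable attached to the monomial prod_{j in e} x_j :
   the empty monomial is 1, which after homogenisation by rho becomes rho *)
Definition Wv (R : realFieldType) (n : nat) (rho : R) (w : {set 'I_n} -> R)
  (e : {set 'I_n}) : R := if e == set0 then rho else w e.

(* Linearisation (with z replaced by w and constants multiplied by rho) of the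
   multilinear reduction of (c_l x - d_l) prod_{s in S} x_s prod_{t in T} (1 - x_t)
   = sum_{U subset T} (-1)^|U| (sum_j c_lj x_{S u U u {j}} - d_l x_{S u U}). *)
Definition rlt_lhs (R : realFieldType) (r n : nat) (C : 'I_r -> 'I_n -> R)
  (d : 'I_r -> R) (l : 'I_r) (S T : {set 'I_n}) (rho : R) (w : {set 'I_n} -> R) : R :=
  \sum_(U in powerset T)
     (-1) ^+ #|U| * (\sum_(j < n) C l j * Wv rho w (S :|: U :|: [set j])
                     - d l * Wv rho w (S :|: U)).

Definition inRLT (R : realFieldType) (r n : nat) (C : 'I_r -> 'I_n -> R)
  (d : 'I_r -> R) (k : nat) (rho : R) (w : {set 'I_n} -> R) : Prop :=
  forall (l : 'I_r) (S T : {set 'I_n}), [disjoint S & T] -> #|S :|: T| = k ->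
    0 <= rlt_lhs C d l S T rho w.

Definition inRki (R : realFieldType) (r n m : nat) (C : 'I_r -> 'I_n -> R)
  (d : 'I_r -> R) (a0 : 'I_m -> R) (a : 'I_m -> 'I_n -> R) (k : nat) (i : 'I_m)
  (rhoi : R) (yi : 'I_n -> R) (u : {set 'I_n} -> R) : Prop :=
  exists w : {set 'I_n} -> R,
    [/\ 0 <= rhoi,
        inRLT C d k rhoi w,
        (forall j : 'I_n, yi j = w [set j]),
        a0 i * rhoi + \sum_(j < n) a i j * yi j = 1
      & forall S : {set 'I_n}, (1 <= #|S| <= k)%N ->
          u S = (a0 i + \sum_(j in S) a i j) * w S
                + \sum_(q in ~: S) a i q * w (S :|: [set q])].

Definition inProjR (R : realFieldType) (r n m : nat) (C : 'I_r -> 'I_n -> R)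
  (d : 'I_r -> R) (a0 : 'I_m -> R) (a : 'I_m -> 'I_n -> R) (k : nat)
  (rho : 'I_m -> R) (y : 'I_m -> 'I_n -> R) : Prop :=
  exists u : {set 'I_n} -> R, forall i : 'I_m, inRki C d a0 a k i (rho i) (y i) u.

Definition den (R : realFieldType) (n m : nat) (a0 : 'I_m -> R)
  (a : 'I_m -> 'I_n -> R) (i : 'I_m) (x : {set 'I_n}) : R :=
  a0 i + \sum_(j < n) a i j * (j \in x)%:R.

Definition inConvG (R : realFieldType) (r n m : nat) (C : 'I_r -> 'I_n -> R)
  (d : 'I_r -> R) (a0 : 'I_m -> R) (a : 'I_m -> 'I_n -> R)
  (rho : 'I_m -> R) (y : 'I_m -> 'I_n -> R) : Prop :=
  exists (K : nat) (lam : 'I_K -> R) (xs : 'I_K -> {set 'I_n}),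
    [/\ forall t, 0 <= lam t,
        \sum_(t < K) lam t = 1,
        forall t, inX C d (xs t),
        forall i, rho i = \sum_(t < K) lam t * (den a0 a i (xs t))^-1
      & forall i j, y i j = \sum_(t < K) lam t * ((j \in xs t)%:R / den a0 a i (xs t))].

From HB Require Import structures.
From mathcomp Require Import all_boot all_order all_algebra.
Import Order.TTheory GRing.Theory Num.Theory.
Local Open Scope ring_scope.
Set Implicit Arguments. Unset Strict Implicit. Unset Printing Implicit Defensive.

(* Write [V = Wv rho w] for a lifted point of level [n] and [lam] for its Moebius
   transform on the lattice of subsets, so that [V E] is the sum of [lam S] over
   [S \supseteq E].  The RLT_n constraint of row [l] for [(S, ~: S)] is exactly
   [slack_l(S) * lam S >= 0]; the bound rows [0 <= x_j <= 1] therefore make [lam]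
   nonnegative and supported on [X], i.e. [lam] is a measure on [X] with moments
   [V].  The equations defining [u] say that the measures [lam_i S * den_i S]
   have the same moments for all [i], so by Moebius inversion they are one
   measure [mu], of total mass [1] by the normalisation; dividing by the
   denominators writes [(rho, y)] as the convex combination of points of [G] with
   weights [mu].  Conversely the moments of a convex combination of points of [G]
   satisfy every constraint, and each constraint of level [k] is the sum of two of
   level [k + 1], obtained by multiplying with [x_j] and [1 - x_j]. *)

Section Toggle.

Variable T : finType.
Implicit Types (j x : T) (A B S V : {set T}).

Definition toggle j S := if j \in S then S :\ j else j |: S.

Lemma in_toggle j x S :
  (x \in toggle j S) = if x == j then j \notin S else x \in S.
Proof.
by rewrite /toggle; case: ifP => jS; rewrite !inE; case: eqP => [->|] //=; rewrite jS.
Qed.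

Lemma toggleK j : involutive (toggle j).
Proof.
by move=> S; apply/setP => x; rewrite !in_toggle; case: eqP => [->|]; rewrite ?eqxx ?negbK.
Qed.

Lemma sign_toggle (R : pzRingType) j S :
  (-1) ^+ #|toggle j S| = - (-1) ^+ #|S| :> R.
Proof.
rewrite /toggle; case: ifP => jS; last by rewrite cardsU1 jS exprS mulN1r.
by rewrite [in RHS](cardsD1 j) jS exprS mulN1r opprK.
Qed.

Lemma subset_togglel j A S : j \notin A -> (A \subset toggle j S) = (A \subset S).
Proof.
move=> jA; apply/subsetP/subsetP => sub x xA; have := sub x xA; rewrite in_toggle;
  case: eqP => // xj; by move: xA jA; rewrite xj => ->.
Qed.

Lemma subset_toggler j B S : j \in B -> (toggle j S \subset B) = (S \subset B).
Proof.
move=> jB; apply/subsetP/subsetP => sub x.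
  by move=> xS; case: (x =P j) => [-> //|/eqP xj]; apply: sub; rewrite in_toggle (negbTE xj).
by rewrite in_toggle; case: eqP => [->|_ /sub].
Qed.

Lemma setD_toggler j V S : j \in V -> V :\: toggle j S = toggle j (V :\: S).
Proof.
move=> jV; apply/setP => x; rewrite !(in_toggle, inE); case: eqP => [->|//].
by rewrite jV !andbT negbK.
Qed.

Lemma setD_togglel j V S : j \notin S -> toggle j V :\: S = toggle j (V :\: S).
Proof.
move=> jS; apply/setP => x; rewrite !(in_toggle, inE); case: eqP => [->|//].
by rewrite jS.
Qed.

Lemma sum_powersetU1 (R : nmodType) j B (F : {set T} -> R) : j \notin B ->
  \sum_(U in powerset (j |: B)) F U =
    \sum_(U in powerset B) F U + \sum_(U in powerset B) F (j |: U).
Proof.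
move=> jB; rewrite (bigID (fun U : {set T} => j \in U)) /= addrC; congr (_ + _).
  apply: eq_bigl => U; rewrite !powersetE; apply/andP/idP => [[/subsetP UjB jU]|UB].
    apply/subsetP => x xU; have := UjB x xU; rewrite !inE.
    by case: eqP => // xj; rewrite -xj xU in jU.
  by split; [apply: subset_trans UB (subsetU1 _ _) | apply: contra jB; apply: (subsetP UB)].
rewrite (reindex_onto (fun V => j |: V) (fun U => U :\ j)) /=; last first.
  by move=> U /andP [_ jU]; rewrite setD1K.
apply: eq_bigl => V; rewrite !powersetE setU11 andbT.
apply/andP/idP => [[/subsetP VjB /eqP VjV]|/subsetP VB]; last first.
  split; first by apply/subsetP => x; rewrite !inE => /predU1P [->|/VB ->]; rewrite ?eqxx ?orbT.
  by rewrite setU1K //; apply: contra jB; apply: VB.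
apply/subsetP => x xV; have := VjB x; rewrite !inE xV orbT => /(_ isT) /predU1P [xj|//].
by move: xV; rewrite -VjV xj !inE eqxx.
Qed.

Lemma sum_toggle_eq0 (R : numDomainType) j (P : pred {set T}) (F : {set T} -> R) :
    (forall S, P (toggle j S) = P S) -> (forall S, P S -> F (toggle j S) = - F S) ->
  \sum_(S | P S) F S = 0.
Proof.
move=> Ptoggle Ftoggle.
have sumN : \sum_(S | P S) F S = - \sum_(S | P S) F S.
  rewrite {1}(reindex_inj (can_inj (toggleK j))) -sumrN.
  by apply: eq_big => [S|S PS]; rewrite ?Ptoggle // Ftoggle // -Ptoggle.
apply/eqP; have := mulrn_eq0 (\sum_(S | P S) F S) 2.
by rewrite mulr2n {1}sumN addNr eqxx => /esym.
Qed.

End Toggle.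

Section Moebius.

Variables (R : numDomainType) (T : finType).
Implicit Types (e S V W : {set T}) (F mu : {set T} -> R).

Lemma sum_interval_toggle F e V : e \subset V ->
    (forall j, j \in V :\: e -> forall S, F (toggle j S) = - F S) ->
  \sum_(S : {set T} | (e \subset S) && (S \subset V)) F S = if e == V then F e else 0.
Proof.
move=> eV Ftoggle; case: eqP => [<-|/eqP neV].
  by rewrite (big_pred1 e) ?eqxx // => S /=; rewrite eqEsubset andbC.
have /properP [_ [j jV je]] : e \proper V by rewrite properEneq neV.
apply: (sum_toggle_eq0 (j := j)) => [S|S _]; last by rewrite Ftoggle // inE je.
by rewrite subset_togglel // subset_toggler.
Qed.

Lemma sum_interval_sign e V : e \subset V ->
  \sum_(S : {set T} | (e \subset S) && (S \subset V)) (-1) ^+ #|S :\: e| = (e == V)%:R :> R.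
Proof.
move=> eV; rewrite sum_interval_toggle // => [|j /setDP [_ je] S].
  by case: eqP; rewrite ?setDv ?cards0.
by rewrite setD_togglel // sign_toggle.
Qed.

Lemma sum_interval_cosign e V : e \subset V ->
  \sum_(S : {set T} | (e \subset S) && (S \subset V)) (-1) ^+ #|V :\: S| = (e == V)%:R :> R.
Proof.
move=> eV; rewrite sum_interval_toggle // => [|j /setDP [jV _] S].
  by case: eqP => [->|]; rewrite ?setDv ?cards0.
by rewrite setD_toggler // sign_toggle.
Qed.

Definition zeta mu e := \sum_(S : {set T} | e \subset S) mu S.

Definition moebius F S := \sum_(W : {set T} | S \subset W) (-1) ^+ #|W :\: S| * F W.

Definition moment (I : finType) (c : I -> R) (xs : I -> {set T}) e :=
  \sum_t c t * (e \subset xs t)%:R.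

Lemma zeta_moment mu e : zeta mu e = moment mu id e.
Proof.
by rewrite /zeta /moment big_mkcond; apply: eq_bigr => S _; case: ifP; rewrite ?mulr1 ?mulr0.
Qed.

Lemma moebiusK F : zeta (moebius F) =1 F.
Proof.
move=> e; rewrite /zeta /moebius.
rewrite (exchange_big_dep (fun W => e \subset W)) /=; last exact: subset_trans.
under eq_bigr => W eW do rewrite -mulr_suml sum_interval_cosign //.
rewrite (bigD1 e) //= eqxx mul1r big1 ?addr0 // => W /andP [_ neW].
by rewrite eq_sym (negbTE neW) mul0r.
Qed.

Lemma zetaK mu : moebius (zeta mu) =1 mu.
Proof.
move=> S; rewrite /zeta /moebius.
under eq_bigr do rewrite mulr_sumr.
rewrite (exchange_big_dep (fun W => S \subset W)) /=; last exact: subset_trans.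
under eq_bigr => W SW do rewrite -mulr_suml sum_interval_sign //.
rewrite (bigD1 S) //= eqxx mul1r big1 ?addr0 // => W /andP [_ neW].
by rewrite eq_sym (negbTE neW) mul0r.
Qed.

Lemma eq_moebius F F' : F =1 F' -> moebius F =1 moebius F'.
Proof. by move=> eqF S; apply: eq_bigr => W _; rewrite eqF. Qed.

Lemma moebius_complE F S :
  moebius F S = \sum_(U : {set T} | U \subset ~: S) (-1) ^+ #|U| * F (S :|: U).
Proof.
rewrite /moebius (reindex_onto (fun U => S :|: U) (fun W => W :\: S)) /=; last first.
  by move=> W SW; rewrite -{2}(setID W S) (setIidPr SW).
apply: eq_big => U; last by move=> /andP [_ /eqP ->].
rewrite subsetUl setDUl setDv set0U -disjoints_subset.
exact: sameP eqP setDidPl.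
Qed.

End Moebius.

Section AffineMoments.

Variables (R : realFieldType) (n : nat) (I : finType).
Variables (c : I -> R) (xs : I -> {set 'I_n}) (b0 : R) (b : 'I_n -> R).

(* [moment c xs] linearises the monomials on the combination [c] of the points
   [xs]; this is the multilinear expansion of [prod_(j in E) x_j * (b0 + b^T x)]. *)
Lemma moment_affine E :
  moment (fun t => c t * (b0 + \sum_(j < n) b j * (j \in xs t)%:R)) xs E =
  (b0 + \sum_(j in E) b j) * moment c xs E
    + \sum_(q in ~: E) b q * moment c xs (E :|: [set q]).
Proof.
have pointwise (x : {set 'I_n}) : (E \subset x)%:R * (b0 + \sum_(j < n) b j * (j \in x)%:R)
    = (b0 + \sum_(j in E) b j) * (E \subset x)%:R
      + \sum_(q in ~: E) b q * (E :|: [set q] \subset x)%:R :> R.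
  case Ex: (E \subset x); last first.
    by rewrite !mulr0 mul0r add0r; apply/esym/big1 => q _; rewrite subUset Ex mulr0.
  rewrite mulr1 mul1r -addrA (bigID (fun j => j \in E)) /=; congr (_ + (_ + _)).
    by apply: eq_bigr => j jE; rewrite (subsetP Ex j jE) mulr1.
  by apply: eq_big => [q|q _]; rewrite ?inE // subUset Ex sub1set.
rewrite /moment; under eq_bigr do rewrite mulrAC -mulrA pointwise mulrDr.
rewrite big_split mulr_sumr; congr (_ + _).
  by apply: eq_bigr => t _; rewrite mulrCA.
under [RHS]eq_bigr do rewrite mulr_sumr.
rewrite [RHS]exchange_big /=; apply: eq_bigr => t _; rewrite mulr_sumr.
by apply: eq_bigr => q _; rewrite mulrCA.
Qed.

Lemma moment_affine0 :
  moment (fun t => c t * (b0 + \sum_(j < n) b j * (j \in xs t)%:R)) xs set0 =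
  b0 * moment c xs set0 + \sum_(j < n) b j * moment c xs [set j].
Proof.
rewrite moment_affine big_set0 addr0 setC0; congr (_ + _).
by apply: eq_big => [j|j _]; rewrite ?inE ?set0U.
Qed.

End AffineMoments.

Section RLT.

Variables (R : realFieldType) (r n m : nat) (C : 'I_r -> 'I_n -> R) (d : 'I_r -> R).
Variables (a0 : 'I_m -> R) (a : 'I_m -> 'I_n -> R).
Implicit Types (l : 'I_r) (E S T x : {set 'I_n}) (V : {set 'I_n} -> R).

Definition slack l x := \sum_(j < n) C l j * (j \in x)%:R - d l.

Lemma inX_slack x : inX C d x <-> forall l, 0 <= slack l x.
Proof. by split=> hx l; have := hx l; rewrite subr_ge0. Qed.

(* Linearisation of [(c_l x - d_l) prod_(j in E) x_j], the monomial
   [prod_(j in F) x_j] being replaced by [V F]. *)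
Definition lifted_row l V E := \sum_(j < n) C l j * V (E :|: [set j]) - d l * V E.

Definition rlt_form l S T V :=
  \sum_(U in powerset T) (-1) ^+ #|U| * lifted_row l V (S :|: U).

Lemma rlt_lhsE l S T rho w : rlt_lhs C d l S T rho w = rlt_form l S T (Wv rho w).
Proof. by []. Qed.

(* Multiplying by [x_j + (1 - x_j) = 1] splits a constraint of level [k] into two
   of level [k + 1]. *)
Lemma rlt_form_split l S T V j : j \notin T ->
  rlt_form l S T V = rlt_form l S (j |: T) V + rlt_form l (j |: S) T V.
Proof.
move=> jT; rewrite [rlt_form l S (j |: T) V]/rlt_form sum_powersetU1 //.
have -> : \sum_(U in powerset T) (-1) ^+ #|j |: U| * lifted_row l V (S :|: (j |: U))
          = - rlt_form l (j |: S) T V.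
  rewrite -sumrN; apply: eq_bigr => U; rewrite powersetE => UT.
  have jU : j \notin U by apply: contra jT; apply: (subsetP UT).
  by rewrite cardsU1 jU exprS mulN1r mulNr setUCA setUA.
by rewrite addrNK.
Qed.

(* The terms of [lifted_row] with [j \notin S] cancel in pairs. *)
Lemma rlt_form_compl l S V : rlt_form l S (~: S) V = slack l S * moebius V S.
Proof.
rewrite /rlt_form /lifted_row moebius_complE /slack.
under eq_bigl do rewrite powersetE.
under eq_bigr do rewrite mulrBr mulr_sumr.
rewrite sumrB exchange_big /= mulrBl mulr_suml; congr (_ - _); last first.
  by rewrite mulr_sumr; apply: eq_bigr => U _; rewrite mulrCA.
apply: eq_bigr => j _; case jS: (j \in S).
  rewrite mulr1 mulr_sumr; apply: eq_bigr => U _; rewrite mulrCA; congr (_ * (_ * V _)).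
  by apply/setP => x; rewrite !inE; case: eqP => [->|]; rewrite ?jS ?orbT ?orbF.
rewrite mulr0 mul0r; under eq_bigr do rewrite mulrCA -setUA.
rewrite -mulr_sumr (sum_toggle_eq0 (j := j)) ?mulr0 // => U.
  by rewrite subset_toggler // inE jS.
move=> _; rewrite sign_toggle mulNr; congr (- (_ * V (S :|: _))).
by apply/setP => x; rewrite !(inE, in_toggle); case: eqP; rewrite ?orbT ?orbF.
Qed.

Lemma rlt_form_indicator l S T x : inX C d x ->
  0 <= rlt_form l S T (fun E => (E \subset x)%:R).
Proof.
move=> /inX_slack /(_ l) slack_ge0.
have row_ind E : lifted_row l (fun E => (E \subset x)%:R) E = (E \subset x)%:R * slack l x.
  rewrite /lifted_row /slack; case Ex: (E \subset x); last first.
    by rewrite mul0r mulr0 subr0; apply: big1 => j _; rewrite subUset Ex mulr0.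
  rewrite mul1r mulr1; congr (_ - _).
  by apply: eq_bigr => j _; rewrite subUset Ex sub1set.
rewrite /rlt_form; under eq_bigr do rewrite row_ind mulrA.
rewrite -mulr_suml; apply: mulr_ge0; last exact: slack_ge0.
have [Tx0|/set0Pn [j /setIP [jT jx]]] := eqVneq (T :&: x) set0; last first.
  rewrite (sum_toggle_eq0 (j := j)) // => U; first by rewrite !powersetE subset_toggler.
  by move=> _; rewrite sign_toggle !subUset subset_toggler // mulNr.
rewrite (bigD1 set0) /=; last by rewrite powersetE sub0set.
rewrite big1 ?addr0 ?cards0 ?expr0 ?mul1r ?ler0n // => U /andP [UT /set0Pn [z zU]].
rewrite powersetE in UT; suff -> : (S :|: U \subset x) = false by rewrite mulr0.
apply/negP => /subsetP Sx; have : z \in T :&: x by rewrite inE (subsetP UT) // Sx // inE zU orbT.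
by rewrite Tx0 inE.
Qed.

Lemma rlt_form_lin l S T V (I : finType) (c : I -> R) (f : I -> {set 'I_n} -> R) :
    (forall E, V E = \sum_t c t * f t E) ->
  rlt_form l S T V = \sum_t c t * rlt_form l S T (f t).
Proof.
move=> VE; have row_lin E : lifted_row l V E = \sum_t c t * lifted_row l (f t) E.
  rewrite /lifted_row; under [RHS]eq_bigr do rewrite mulrBr.
  rewrite sumrB VE mulr_sumr; congr (_ - _); last first.
    by apply: eq_bigr => t _; rewrite mulrCA.
  under eq_bigr do rewrite VE mulr_sumr.
  rewrite exchange_big /=; apply: eq_bigr => t _; rewrite mulr_sumr.
  by apply: eq_bigr => j _; rewrite mulrCA.
rewrite /rlt_form; under eq_bigr do rewrite row_lin mulr_sumr.
rewrite exchange_big /=; apply: eq_bigr => t _; rewrite mulr_sumr.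
by apply: eq_bigr => U _; rewrite mulrCA.
Qed.

Lemma inRLT_succ k rho w : (k < n)%N -> inRLT C d k.+1 rho w -> inRLT C d k rho w.
Proof.
move=> kn RLTw l S T dST cST.
have [j jST] : exists j, j \notin S :|: T.
  apply/existsP; apply: contraLR kn; rewrite negb_exists => /forallP ST.
  have STT : S :|: T = setT by apply/setP => x; have := ST x; rewrite negbK in_setT => ->.
  by rewrite -cST STT cardsT card_ord ltnn.
have [jS jT] : j \notin S /\ j \notin T by move: jST; rewrite inE negb_or => /andP.
rewrite rlt_lhsE (rlt_form_split _ _ _ jT); apply: addr_ge0; rewrite -rlt_lhsE; apply: RLTw.
- by rewrite disjoint_sym disjoints_subset subUset sub1set inE jS -disjoints_subset disjoint_sym.
- by rewrite setUCA cardsU1 jST cST.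
- by rewrite disjoints_subset subUset sub1set inE jT -disjoints_subset.
- by rewrite -setUA cardsU1 jST cST.
Qed.

Lemma inRLT_full l S rho w : inRLT C d n rho w -> 0 <= slack l S * moebius (Wv rho w) S.
Proof.
move=> RLTw; rewrite -rlt_form_compl -rlt_lhsE; apply: RLTw.
  by rewrite disjoints_subset setCK.
by rewrite setUCr cardsT card_ord.
Qed.


Lemma inProjR_succ k rho y :
  (k < n)%N -> inProjR C d a0 a k.+1 rho y -> inProjR C d a0 a k rho y.
Proof.
move=> kn [u hu]; exists u => i; have [w [rho_ge0 RLTw yw norm uw]] := hu i.
exists w; split=> //; first exact: inRLT_succ.
by move=> S /andP [S_gt0 Sk]; apply: uw; rewrite S_gt0 leqW.
Qed.

Hypothesis den_gt0 : forall i x, inX C d x -> 0 < den a0 a i x.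

(* Take [u] and [w^i] to be the moments of the combination, the weights of
   [w^i] being those of [u] divided by the denominators. *)
Lemma inConvG_inProjR rho y : inConvG C d a0 a rho y -> inProjR C d a0 a n rho y.
Proof.
case=> K [lam [xs [lam_ge0 lam1 xsX rhoE yE]]]; exists (moment lam xs) => i.
pose c t := lam t / den a0 a i (xs t).
have c_den t : c t * den a0 a i (xs t) = lam t by rewrite divfK // gt_eqF ?den_gt0.
have rho_moment : rho i = moment c xs set0.
  by rewrite rhoE; apply: eq_bigr => t _; rewrite sub0set mulr1.
have y_moment j : y i j = moment c xs [set j].
  by rewrite yE; apply: eq_bigr => t _; rewrite sub1set mulrA mulrAC.
exists (moment c xs); split.
- rewrite rho_moment; apply: sumr_ge0 => t _.
  by rewrite sub0set mulr1 divr_ge0 // ltW ?den_gt0.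
- move=> l S T _ _; rewrite rlt_lhsE (@rlt_form_lin l S T _ _ c (fun t E => (E \subset xs t)%:R)).
    apply: sumr_ge0 => t _; rewrite mulr_ge0 ?rlt_form_indicator //.
    by rewrite divr_ge0 // ltW ?den_gt0.
  by move=> E; rewrite /Wv; case: eqP => // ->; rewrite rho_moment.
- exact: y_moment.
- rewrite rho_moment; under eq_bigr do rewrite y_moment.
  rewrite -moment_affine0 -[in RHS]lam1; apply: eq_bigr => t _.
  by rewrite sub0set mulr1 c_den.
- move=> S _; rewrite -moment_affine; apply: eq_bigr => t _.
  by rewrite c_den.
Qed.

Hypothesis n_gt0 : (0 < n)%N.
Hypothesis lower_bounds : forall j : 'I_n, exists l : 'I_r,
  (forall j' : 'I_n, C l j' = (j' == j)%:R) /\ d l = 0.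
Hypothesis upper_bounds : forall j : 'I_n, exists l : 'I_r,
  (forall j' : 'I_n, C l j' = - (j' == j)%:R) /\ d l = -1.

(* One of the rows [x_j >= 0], [- x_j >= -1] has slack [1] at the 0/1 point [S]. *)
Lemma exists_slack1 S : exists l, slack l S = 1.
Proof.
pose j0 := Ordinal n_gt0.
have sum_coord c l : (forall j, C l j = c * (j == j0)%:R) ->
    \sum_(j < n) C l j * (j \in S)%:R = c * (j0 \in S)%:R.
  move=> Cl; rewrite (bigD1 j0) //= Cl eqxx mulr1 big1 ?addr0 // => j /negbTE jj0.
  by rewrite Cl jj0 mulr0 mul0r.
have [l [Cl dl]] := lower_bounds j0; have [l' [Cl' dl']] := upper_bounds j0.
case jS: (j0 \in S); [exists l | exists l']; rewrite /slack.
  by rewrite (sum_coord 1) => [|j]; rewrite ?Cl ?mul1r // jS dl subr0.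
by rewrite (sum_coord (-1)) => [|j]; rewrite ?Cl' ?mulN1r // jS dl' oppr0 sub0r opprK.
Qed.

Lemma moebius_ge0 S rho w : inRLT C d n rho w -> 0 <= moebius (Wv rho w) S.
Proof.
move=> RLTw; have [l slack1] := exists_slack1 S.
by have := inRLT_full l S RLTw; rewrite slack1 mul1r.
Qed.

(* Negative slack at [S] forces the nonnegative coefficient to vanish. *)
Lemma moebius_supp S rho w :
  inRLT C d n rho w -> moebius (Wv rho w) S != 0 -> inX C d S.
Proof.
move=> RLTw nz; apply/inX_slack => l; rewrite leNgt; apply: contra nz => slack_lt0.
rewrite eq_le moebius_ge0 // andbT.
by rewrite -(nmulr_rge0 _ slack_lt0) inRLT_full.
Qed.
(* The witness is the Moebius transform of the lifted point [Wv rhoi w]. *)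
Lemma inRki_moebius i rhoi yi u : inRki C d a0 a n i rhoi yi u ->
  exists lam : {set 'I_n} -> R,
    [/\ forall S, 0 <= lam S,
        forall S, lam S != 0 -> inX C d S,
        forall S, lam S * den a0 a i S = moebius (Wv 1 u) S,
        rhoi = \sum_S lam S
      & forall j, yi j = \sum_S lam S * (j \in S)%:R].
Proof.
case=> w [rho_ge0 RLTw yw norm uw]; set V := Wv rhoi w.
have V_moment E : V E = moment (moebius V) id E by rewrite -zeta_moment moebiusK.
have V0 : V set0 = rhoi by rewrite /V /Wv eqxx.
have Vw E : E != set0 -> V E = w E by rewrite /V /Wv => /negbTE ->.
have nzU E q : E :|: [set q] != set0 by apply/set0Pn; exists q; rewrite !inE eqxx orbT.
have V1 j : V [set j] = yi j by rewrite -(set0U [set j]) Vw // set0U yw.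
exists (moebius V); split.
- by move=> S; apply: moebius_ge0.
- by move=> S; apply: moebius_supp.
- move=> S; rewrite -(zetaK (fun S => moebius V S * den a0 a i S) S).
  apply: eq_moebius => E; rewrite zeta_moment /Wv.
  have [->|E0] := eqVneq E set0.
    rewrite (moment_affine0 (moebius V) id (a0 i) (a i)) -V_moment V0 -norm.
    by congr (_ + _); apply: eq_bigr => j _; rewrite -V_moment V1.
  rewrite (moment_affine (moebius V) id (a0 i) (a i)) -!V_moment uw.
    rewrite Vw //; congr (_ + _); apply: eq_bigr => q _.
    by rewrite -V_moment Vw.
  by rewrite card_gt0 E0 /=; apply: leq_trans (max_card _) _; rewrite card_ord.
- by rewrite -V0 V_moment; apply: eq_bigr => S _; rewrite sub0set mulr1.
- by move=> j; rewrite -V1 V_moment; apply: eq_bigr => S _; rewrite sub1set.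
Qed.

Lemma inConvG_fin (I : finType) (lam : I -> R) (xs : I -> {set 'I_n}) rho y :
    (exists x0, inX C d x0) -> (forall t, 0 <= lam t) -> \sum_t lam t = 1 ->
    (forall t, lam t != 0 -> inX C d (xs t)) ->
    (forall i, rho i = \sum_t lam t / den a0 a i (xs t)) ->
    (forall i j, y i j = \sum_t lam t * ((j \in xs t)%:R / den a0 a i (xs t))) ->
  inConvG C d a0 a rho y.
Proof.
move=> [x0 x0X] lam_ge0 lam1 xsX rhoE yE.
(* Points of weight [0] need not lie in [X]; they are replaced by [x0]. *)
pose xs' t := if lam t == 0 then x0 else xs t.
have lam_xs' (f : {set 'I_n} -> R) t : lam t * f (xs' t) = lam t * f (xs t).
  by rewrite /xs'; case: eqP => [->|]; rewrite ?mul0r.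
exists #|I|, (fun k => lam (enum_val k)), (fun k => xs' (enum_val k)); split.
- by move=> k; apply: lam_ge0.
- by rewrite -big_enum_val.
- by move=> k; rewrite /xs'; case: eqP => // /eqP /xsX.
- move=> i; rewrite rhoE -(big_enum_val (fun t => lam t / den a0 a i (xs' t))).
  by apply: eq_bigr => t _; rewrite (lam_xs' (fun x => (den a0 a i x)^-1)).
- move=> i j; rewrite yE.
  rewrite -(big_enum_val (fun t => lam t * ((j \in xs' t)%:R / den a0 a i (xs' t)))).
  by apply: eq_bigr => t _; rewrite (lam_xs' (fun x => (j \in x)%:R / den a0 a i x)).
Qed.

(* The weights are [moebius (Wv 1 u)], the common value of the
   [lam S * den a0 a i S] of [inRki_moebius]. *)
Lemma inProjR_inConvG rho y :
  (exists x0, inX C d x0) -> inProjR C d a0 a n rho y -> inConvG C d a0 a rho y.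
Proof.
move=> Xne [u hu]; have [m0|m_gt0] := posnP m.
  have no_i (i : 'I_m) : False by case: i; rewrite m0.
  have [x0 x0X] := Xne; exists 1%N, (fun _ => 1), (fun _ => x0).
  by split=> [//||//|i|i]; rewrite ?big_ord1 //; case: (no_i i).
pose mu := moebius (Wv 1 u).
have [lam0 [lam0_ge0 lam0X lam0_den _ _]] := inRki_moebius (hu (Ordinal m_gt0)).
rewrite -/mu in lam0_den.
have mu_ge0 S : 0 <= mu S.
  rewrite -lam0_den; have [->|/lam0X SX] := eqVneq (lam0 S) 0; first by rewrite mul0r.
  by rewrite mulr_ge0 // ltW ?den_gt0.
have muX S : mu S != 0 -> inX C d S.
  by rewrite -lam0_den => nz; apply: lam0X; apply: contraNneq nz => ->; rewrite mul0r.
have mu1 : \sum_S mu S = 1.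
  have := moebiusK (Wv 1 u) set0; rewrite /zeta {2}/Wv eqxx => <-.
  by apply: eq_bigl => S; rewrite sub0set.
have lam_mu i : exists lam : {set 'I_n} -> R,
    [/\ forall S, lam S = mu S / den a0 a i S, rho i = \sum_S lam S
      & forall j, y i j = \sum_S lam S * (j \in S)%:R].
  have [lam [_ lamX lam_den rhoE yE]] := inRki_moebius (hu i); rewrite -/mu in lam_den.
  exists lam; split=> // S; have [lam0S|/lamX SX] := eqVneq (lam S) 0.
    by rewrite -lam_den lam0S !mul0r.
  by rewrite -lam_den mulfK // gt_eqF ?den_gt0.
apply: (inConvG_fin (xs := id) Xne mu_ge0 mu1 muX) => [i|i j];
  have [lam [lamE rhoE yE]] := lam_mu i; rewrite ?rhoE ?yE;
  apply: eq_bigr => S _; rewrite lamE //.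
by rewrite mulrAC mulrA.
Qed.

End RLT.

Theorem theorem3 (R : realFieldType) (r n m : nat)
  (C : 'I_r -> 'I_n -> R) (d : 'I_r -> R)
  (a0 : 'I_m -> R) (a : 'I_m -> 'I_n -> R)
  (hn : (0 < n)%N)
  (hlow : forall j : 'I_n, exists l : 'I_r,
      (forall j' : 'I_n, C l j' = (j' == j)%:R) /\ d l = 0)
  (hupp : forall j : 'I_n, exists l : 'I_r,
      (forall j' : 'I_n, C l j' = - (j' == j)%:R) /\ d l = -1)
  (hXne : exists x : {set 'I_n}, inX C d x)
  (hpos : forall (i : 'I_m) (x : {set 'I_n}), inX C d x -> 0 < den a0 a i x) :
  (forall k : nat, (1 <= k)%N -> (k < n)%N ->
     forall (rho : 'I_m -> R) (y : 'I_m -> 'I_n -> R),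
       inProjR C d a0 a k.+1 rho y -> inProjR C d a0 a k rho y)
  /\
  (forall (rho : 'I_m -> R) (y : 'I_m -> 'I_n -> R),
       inProjR C d a0 a n rho y <-> inConvG C d a0 a rho y).
Proof.
split=> [k _ kn rho y|rho y]; first exact: inProjR_succ.
by split; [exact: inProjR_inConvG | exact: inConvG_inProjR].
Qed.
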